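(* Every reflection point of $\mathrm{OPT}$ that is not a tip (endpoint) of a segment is a pure reflection point.
   Context: Instance: vertical line segments $s_1,\dots,s_n$ in $\mathbb{R}^2$, each of length $1$, with pairwise distinct $x$-coordinates. A tour is a cyclic sequence of points $p_1,\dots,p_\sigma$, each on some segment, with every segment containing at least one $p_j$; the straight segments joining consecutive points are legs; cost is total length. $\mathrm{OPT}$ is a fixed minimum-cost tour, oriented $p_1\to p_2\to\cdots$, with no two consecutive points on the same segment and not self-crossing. For a point $p_j$ of $\mathrm{OPT}$ on segment $s$, a leg incident to $p_j$ is to the left (right) of $s$ if it lies in $x\le x(s)$ (resp. $x\ge x(s)$); $p_j$ is a reflection point if both incident legs are to the left of $s$ or both are to the right of $s$. A reflection point $p_j$ on $s$ is a pure reflection point if the two legs incident to $p_j$ make the same angle with $s$. *)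

From Stdlib Require Export Reals Lra Lia.
Open Scope R_scope.

Definition point := (R * R)%type.

Definition on_seg (X Y : nat -> R) (i : nat) (q : point) : Prop :=
  fst q = X i /\ Y i <= snd q <= Y i + 1.

Definition is_tip (X Y : nat -> R) (i : nat) (q : point) : Prop :=
  q = (X i, Y i) \/ q = (X i, Y i + 1).

(* A tour is a cyclic sequence p 0, ..., p (sigma-1), indices taken mod sigma. *)
Definition nxt (sigma j : nat) : nat := ((j + 1) mod sigma)%nat.
Definition prv (sigma j : nat) : nat := ((j + sigma - 1) mod sigma)%nat.

Definition is_tour (n : nat) (X Y : nat -> R) (sigma : nat) (p : nat -> point)
  : Prop :=
  (0 < sigma)%nat /\
  (forall j, (j < sigma)%nat -> exists i, (i < n)%nat /\ on_seg X Y i (p j)) /\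
  (forall i, (i < n)%nat -> exists j, (j < sigma)%nat /\ on_seg X Y i (p j)).

Definition dist (a b : point) : R :=
  sqrt ((fst a - fst b) ^ 2 + (snd a - snd b) ^ 2).

Fixpoint sumR (f : nat -> R) (k : nat) : R :=
  match k with
  | O => 0
  | S k' => sumR f k' + f k'
  end.

Definition cost (sigma : nat) (p : nat -> point) : R :=
  sumR (fun j => dist (p j) (p (nxt sigma j))) sigma.

Definition orient (a b c : point) : R :=
  (fst b - fst a) * (snd c - snd a) - (snd b - snd a) * (fst c - fst a).

Definition proper_cross (a b c d : point) : Prop :=
  orient a b c * orient a b d < 0 /\ orient c d a * orient c d b < 0.

Definition not_self_crossing (sigma : nat) (p : nat -> point) : Prop :=
  forall j k, (j < sigma)%nat -> (k < sigma)%nat -> j <> k ->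
    nxt sigma j <> k -> nxt sigma k <> j ->
    ~ proper_cross (p j) (p (nxt sigma j)) (p k) (p (nxt sigma k)).

(* The leg from p j to q lies to the left (right) of segment i, i.e. in the
   half-plane x <= X i (x >= X i). Since p j lies on segment i, this only
   depends on the other endpoint q. *)
Definition leg_left (X : nat -> R) (i : nat) (a b : point) : Prop :=
  fst a <= X i /\ fst b <= X i.
Definition leg_right (X : nat -> R) (i : nat) (a b : point) : Prop :=
  X i <= fst a /\ X i <= fst b.

Definition is_reflection (X : nat -> R) (i sigma : nat) (p : nat -> point)
  (j : nat) : Prop :=
  (leg_left X i (p (prv sigma j)) (p j) /\ leg_left X i (p j) (p (nxt sigma j)))
  \/
  (leg_right X i (p (prv sigma j)) (p j) /\ leg_right X i (p j) (p (nxt sigma j))).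

(* The (non-oriented) angle in [0, pi/2] between the leg [a,b] and a vertical
   line (the supporting line of a segment). *)
Definition angle_with_vertical (a b : point) : R :=
  acos (Rabs (snd b - snd a) / dist a b).

Definition is_pure_reflection (X : nat -> R) (i sigma : nat)
  (p : nat -> point) (j : nat) : Prop :=
  is_reflection X i sigma p j /\
  angle_with_vertical (p j) (p (prv sigma j)) =
  angle_with_vertical (p j) (p (nxt sigma j)).

(* Sliding the point (x,y) of OPT on segment s along s gives another tour in
   which only the two legs at that point, to its neighbours a and b, change.
   The neighbours lie off the line of s (no two consecutive points on one
   segment, distinct x-coordinates), so t |-> |a - (x,t)| + |(x,t) - b| is
   differentiable and, when (x,y) is not a tip, has an interior minimum at y.
   Its derivative (y - a_y)/|a - (x,y)| + (y - b_y)/|b - (x,y)| vanishes: the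
   two legs have cosines of equal absolute value with s. *)

From Pilot Require Import Defs.
From Coquelicot Require Import Coquelicot.
(* Coquelicot re-exports [Rlimit.dist], which shadows [Defs.dist]. *)
Import Defs.
Open Scope R_scope.

Lemma nxt_cases (sigma j : nat) : (j < sigma)%nat ->
  ((j + 1 < sigma)%nat /\ nxt sigma j = (j + 1)%nat) \/
  ((j + 1)%nat = sigma /\ nxt sigma j = 0%nat).
Proof.
  intros Hj; unfold nxt.
  destruct (Nat.eq_dec (j + 1) sigma) as [Hlast | Hlast].
  - right; split; [exact Hlast |]. rewrite Hlast; apply Nat.Div0.mod_same; lia.
  - left; split; [lia |]. apply Nat.mod_small; lia.
Qed.

Lemma prv_cases (sigma j : nat) : (j < sigma)%nat ->
  ((1 <= j)%nat /\ prv sigma j = (j - 1)%nat) \/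
  (j = 0%nat /\ prv sigma j = (sigma - 1)%nat).
Proof.
  intros Hj; unfold prv.
  destruct j as [| j].
  - right; split; [reflexivity |]. apply Nat.mod_small; lia.
  - left; split; [lia |].
    replace (S j + sigma - 1)%nat with (j + 1 * sigma)%nat by lia.
    rewrite Nat.Div0.mod_add, Nat.mod_small; lia.
Qed.

Lemma nxt_lt (sigma j : nat) : (j < sigma)%nat -> (nxt sigma j < sigma)%nat.
Proof. intros Hj; destruct (nxt_cases sigma j Hj) as [[? ->] | [? ->]]; lia. Qed.

Lemma prv_lt (sigma j : nat) : (j < sigma)%nat -> (prv sigma j < sigma)%nat.
Proof. intros Hj; destruct (prv_cases sigma j Hj) as [[? ->] | [? ->]]; lia. Qed.

Lemma nxt_neq (sigma j : nat) : (2 <= sigma)%nat -> (j < sigma)%nat ->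
  nxt sigma j <> j.
Proof. intros Hs Hj; destruct (nxt_cases sigma j Hj) as [[? ->] | [? ->]]; lia. Qed.

Lemma nxt_eq_prv (sigma j k : nat) : (j < sigma)%nat -> (k < sigma)%nat ->
  nxt sigma k = j <-> k = prv sigma j.
Proof.
  intros Hj Hk.
  destruct (nxt_cases sigma k Hk) as [[? ->] | [? ->]];
    destruct (prv_cases sigma j Hj) as [[? ->] | [? ->]]; lia.
Qed.

Lemma nxt_prv (sigma j : nat) : (j < sigma)%nat -> nxt sigma (prv sigma j) = j.
Proof. intros Hj; apply (nxt_eq_prv sigma j); auto using prv_lt. Qed.

Lemma prv_neq (sigma j : nat) : (2 <= sigma)%nat -> (j < sigma)%nat ->
  prv sigma j <> j.
Proof.
  intros Hs Hj Hfix; apply (nxt_neq sigma j Hs Hj).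
  rewrite <- Hfix at 1; apply nxt_prv, Hj.
Qed.

Lemma sumR_minus (f g : nat -> R) (N : nat) :
  sumR (fun k => f k - g k) N = sumR f N - sumR g N.
Proof. induction N as [| N IH]; simpl; [| rewrite IH]; lra. Qed.

Lemma sumR_support2 (h : nat -> R) (a b N : nat) :
  a <> b -> (a < N)%nat -> (b < N)%nat ->
  (forall k, (k < N)%nat -> k <> a -> k <> b -> h k = 0) ->
  sumR h N = h a + h b.
Proof.
  intros Hab HaN HbN Hzero.
  assert (Hpartial : forall M, (M <= N)%nat ->
    sumR h M = (if Nat.ltb a M then h a else 0) + (if Nat.ltb b M then h b else 0)).
  { induction M as [| M IH]; intros HM; simpl; [lra |].
    rewrite IH by lia.
    destruct (Nat.ltb_spec a M), (Nat.ltb_spec b M),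
      (Nat.ltb_spec a (S M)), (Nat.ltb_spec b (S M)); try lia.
    all: try (replace M with a in * by lia; lra).
    all: try (replace M with b in * by lia; lra).
    all: rewrite (Hzero M) by lia; lra. }
  rewrite (Hpartial N (le_n N)).
  destruct (Nat.ltb_spec a N), (Nat.ltb_spec b N); lia || lra.
Qed.

Definition move_point (p : nat -> point) (j : nat) (q : point) : nat -> point :=
  fun k => if Nat.eq_dec k j then q else p k.

Lemma cost_move_point (sigma j : nat) (p : nat -> point) (q : point) :
  (2 <= sigma)%nat -> (j < sigma)%nat ->
  cost sigma (move_point p j q) - cost sigma p =
  (dist (p (prv sigma j)) q + dist q (p (nxt sigma j)))
  - (dist (p (prv sigma j)) (p j) + dist (p j) (p (nxt sigma j))).
Proof.
  intros Hs Hj; unfold cost; rewrite <- sumR_minus.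
  rewrite (sumR_support2 _ j (prv sigma j)); auto using prv_lt.
  - unfold move_point; rewrite nxt_prv by exact Hj.
    destruct (Nat.eq_dec j j) as [_ | ]; [| congruence].
    destruct (Nat.eq_dec (nxt sigma j) j) as [Hfix | _];
      [exfalso; exact (nxt_neq sigma j Hs Hj Hfix) |].
    destruct (Nat.eq_dec (prv sigma j) j) as [Hfix | _];
      [exfalso; exact (prv_neq sigma j Hs Hj Hfix) |].
    lra.
  - apply not_eq_sym, prv_neq; assumption.
  - intros k Hk Hkj Hkprv; unfold move_point.
    destruct (Nat.eq_dec k j) as [| _]; [congruence |].
    destruct (Nat.eq_dec (nxt sigma k) j) as [Hnk | _]; [| lra].
    exfalso; apply Hkprv, (nxt_eq_prv sigma j k Hj Hk), Hnk.
Qed.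

Lemma is_derive_dist_vertical (a : point) (x t : R) : fst a <> x ->
  is_derive (fun s => dist a (x, s)) t ((t - snd a) / dist a (x, t)).
Proof.
  intros Hx; unfold dist; cbn [fst snd].
  set (D := (fst a - x) ^ 2 + (snd a - t) ^ 2).
  assert (HD : 0 < D).
  { assert (0 < (fst a - x) ^ 2) by (apply pow2_gt_0; lra).
    pose proof (pow2_ge_0 (snd a - t)); unfold D; lra. }
  assert (0 < sqrt D) by (apply sqrt_lt_R0, HD).
  auto_derive; replace (_ * (_ * 1) + _ * (_ * 1)) with D by (unfold D; ring).
  - exact HD.
  - field; lra.
Qed.

Lemma is_derive_interior_min (f : R -> R) (a b y l : R) :
  a < y < b -> (forall t, a < t < b -> f y <= f t) ->
  is_derive f y l -> l = 0.
Proof.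
  intros [Hay Hyb] Hmin Hder.
  apply is_derive_Reals in Hder.
  set (pr := exist (fun l => derivable_pt_abs f y l) l Hder : derivable_pt f y).
  rewrite <- (derive_pt_eq_0 f y l pr Hder).
  apply (deriv_minimum f a b y pr Hay Hyb).
  intros t Hat Htb; apply Hmin; lra.
Qed.

Lemma dist_comm (a b : point) : dist a b = dist b a.
Proof. unfold dist; f_equal; ring. Qed.

Lemma angle_with_vertical_eq (c a b : point) :
  (snd c - snd a) / dist c a + (snd c - snd b) / dist c b = 0 ->
  angle_with_vertical c a = angle_with_vertical c b.
Proof.
  intros Hstat; unfold angle_with_vertical; f_equal.
  assert (Habs : forall u v, 0 <= v -> Rabs u / v = Rabs (u / v)).
  { intros u v Hv; unfold Rdiv; rewrite Rabs_mult, Rabs_inv, (Rabs_pos_eq v Hv).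
    reflexivity. }
  rewrite !Habs by (unfold dist; apply sqrt_pos).
  replace ((snd b - snd c) / dist c b) with ((snd c - snd a) / dist c a).
  - rewrite <- Rabs_Ropp; f_equal; unfold Rdiv; ring.
  - unfold Rdiv in *; lra.
Qed.

Lemma angle_with_vertical_eq_of_min (a b : point) (x lo hi y : R) :
  fst a <> x -> fst b <> x -> lo < y < hi ->
  (forall t, lo < t < hi ->
     dist a (x, y) + dist (x, y) b <= dist a (x, t) + dist (x, t) b) ->
  angle_with_vertical (x, y) a = angle_with_vertical (x, y) b.
Proof.
  intros Hax Hbx Hy Hmin.
  assert (Hder : is_derive (fun t => dist a (x, t) + dist (x, t) b) y
    ((y - snd a) / dist a (x, y) + (y - snd b) / dist b (x, y))).
  { apply (is_derive_plus (fun t => dist a (x, t)) (fun t => dist (x, t) b)).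
    - apply is_derive_dist_vertical, Hax.
    - apply (is_derive_ext (fun t => dist b (x, t))).
      + intros t; apply dist_comm.
      + apply is_derive_dist_vertical, Hbx. }
  pose proof (is_derive_interior_min _ lo hi y _ Hy Hmin Hder) as Hstat.
  apply angle_with_vertical_eq.
  rewrite (dist_comm (x, y) a), (dist_comm (x, y) b); simpl.
  unfold Rdiv in *; lra.
Qed.

Lemma on_seg_not_tip (X Y : nat -> R) (i : nat) (x y : R) :
  on_seg X Y i (x, y) -> ~ is_tip X Y i (x, y) -> x = X i /\ Y i < y < Y i + 1.
Proof.
  intros [Hx Hy] Htip; simpl in Hx, Hy; subst x; split; [reflexivity |].
  destruct (Req_dec y (Y i)) as [-> | ]; [exfalso; apply Htip; left; reflexivity |].
  destruct (Req_dec y (Y i + 1)) as [-> | ]; [exfalso; apply Htip; right; reflexivity |].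
  lra.
Qed.

Section OptimalTour.

Variables (n : nat) (X Y : nat -> R) (sigma : nat) (p : nat -> point).
Hypothesis Hdistinct : forall i k, (i < n)%nat -> (k < n)%nat -> i <> k -> X i <> X k.
Hypothesis Htour : is_tour n X Y sigma p.
Hypothesis Hopt : forall sigma' p', is_tour n X Y sigma' p' ->
  cost sigma p <= cost sigma' p'.
Hypothesis Hconsec : forall j i, (j < sigma)%nat -> (i < n)%nat ->
  on_seg X Y i (p j) -> ~ on_seg X Y i (p (nxt sigma j)).

Lemma tour_length_ge2 : (2 <= sigma)%nat.
Proof.
  destruct Htour as [Hs [Hon _]].
  destruct (Nat.le_gt_cases 2 sigma) as [| Hsmall]; [assumption | exfalso].
  destruct (Hon 0%nat Hs) as [i [Hi Hp0]].
  apply (Hconsec 0%nat i Hs Hi Hp0).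
  replace (nxt sigma 0) with 0%nat by (unfold nxt; replace sigma with 1%nat by lia; reflexivity).
  exact Hp0.
Qed.

Lemma nxt_x_neq (k : nat) : (k < sigma)%nat -> fst (p (nxt sigma k)) <> fst (p k).
Proof.
  intros Hk; destruct Htour as [_ [Hon _]].
  destruct (Hon k Hk) as [i [Hi Hpk]].
  destruct (Hon (nxt sigma k) (nxt_lt sigma k Hk)) as [i' [Hi' Hpk']].
  destruct (Nat.eq_dec i' i) as [-> | Hne].
  - exfalso; exact (Hconsec k i Hk Hi Hpk Hpk').
  - rewrite (proj1 Hpk), (proj1 Hpk'); exact (Hdistinct i' i Hi' Hi Hne).
Qed.

Lemma prv_x_neq (k : nat) : (k < sigma)%nat -> fst (p (prv sigma k)) <> fst (p k).
Proof.
  intros Hk Heq; apply (nxt_x_neq (prv sigma k) (prv_lt sigma k Hk)).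
  rewrite nxt_prv by exact Hk; symmetry; exact Heq.
Qed.

Lemma is_tour_move_point (j i : nat) (q : point) :
  (j < sigma)%nat -> (i < n)%nat -> on_seg X Y i (p j) -> on_seg X Y i q ->
  is_tour n X Y sigma (move_point p j q).
Proof.
  intros Hj Hi Hpj Hq; destruct Htour as [Hs [Hon Hcov]].
  split; [exact Hs | split].
  - intros k Hk; unfold move_point.
    destruct (Nat.eq_dec k j); [exists i; split; assumption | apply Hon, Hk].
  - intros i' Hi'; destruct (Hcov i' Hi') as [k [Hk Hpk]].
    exists k; split; [exact Hk |]; unfold move_point.
    destruct (Nat.eq_dec k j) as [-> | _]; [| exact Hpk].
    destruct (Nat.eq_dec i' i) as [-> | Hne]; [exact Hq |].
    exfalso; apply (Hdistinct i' i Hi' Hi Hne).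
    rewrite <- (proj1 Hpk), (proj1 Hpj); reflexivity.
Qed.

Lemma optimal_move_along_segment (j i : nat) (q : point) :
  (j < sigma)%nat -> (i < n)%nat -> on_seg X Y i (p j) -> on_seg X Y i q ->
  dist (p (prv sigma j)) (p j) + dist (p j) (p (nxt sigma j))
  <= dist (p (prv sigma j)) q + dist q (p (nxt sigma j)).
Proof.
  intros Hj Hi Hpj Hq.
  pose proof (Hopt sigma _ (is_tour_move_point j i q Hj Hi Hpj Hq)) as Hle.
  pose proof (cost_move_point sigma j p q tour_length_ge2 Hj); lra.
Qed.

End OptimalTour.

Theorem lemma2 (n : nat) (X Y : nat -> R)
  (Hdistinct : forall i k, (i < n)%nat -> (k < n)%nat -> i <> k -> X i <> X k)
  (sigma : nat) (p : nat -> point)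
  (Htour : is_tour n X Y sigma p)
  (Hopt : forall sigma' p', is_tour n X Y sigma' p' ->
            cost sigma p <= cost sigma' p')
  (Hconsec : forall j i, (j < sigma)%nat -> (i < n)%nat ->
            on_seg X Y i (p j) -> ~ on_seg X Y i (p (nxt sigma j)))
  (Hnocross : not_self_crossing sigma p) :
  forall j i, (j < sigma)%nat -> (i < n)%nat ->
    on_seg X Y i (p j) ->
    is_reflection X i sigma p j ->
    ~ is_tip X Y i (p j) ->
    is_pure_reflection X i sigma p j.
Proof.
  intros j i Hj Hi Hpj Hrefl Htip.
  split; [exact Hrefl |].
  pose proof (prv_x_neq n X Y sigma p Hdistinct Htour Hconsec j Hj) as Hprv.
  pose proof (nxt_x_neq n X Y sigma p Hdistinct Htour Hconsec j Hj) as Hnxt.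
  pose proof (optimal_move_along_segment n X Y sigma p Hdistinct Htour Hopt Hconsec j i)
    as Hmin.
  destruct (p j) as [x y].
  destruct (on_seg_not_tip X Y i x y Hpj Htip) as [-> Hy].
  apply (angle_with_vertical_eq_of_min _ _ _ (Y i) (Y i + 1)); [assumption.. |].
  intros t Ht; apply (Hmin (X i, t) Hj Hi Hpj); split; simpl; lra.
Qed.
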